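(* Let $\rho$ be a polymatroid on a finite set $E$ and let $M_1,M_2,\ldots,M_k$ be matroids on $E$ with $\rho=r_{M_1}+r_{M_2}+\cdots+r_{M_k}$. (1) Let $X$ be any incidence set of $\rho$. Then there is exactly one index $i\in[k]$ for which all elements of $X$ are parallel in $M_i$ (i.e., $X$ is contained in a single parallel class of $M_i$), and for every $j\in[k]$ with $j\neq i$, no two elements of $X$ are parallel in $M_j$. If, moreover, the equation $\rho(Y)=1+\sum_{e\in Y}(\rho(e)-1)$ also holds for $Y=X$, then for every $j\neq i$, the only subsets of $X$ that are circuits of $M_j$ are singletons. (2) Let $X$ and $Y$ be incidence sets of $\rho$ and suppose there are elements $a\in X$ and $b\in Y$ with $\rho(\{a,b\})=\rho(a)+\rho(b)$. If $X\cap Y\neq\emptyset$, then $|X\cap Y|=1$, and the unique index $i$ for which the elements of $X$ are parallel in $M_i$ differs from the unique index $j$ for which the elements of $Y$ are parallel in $M_j$.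
   Context: A polymatroid on a finite set $E$ is a function $\rho:2^E\to\mathbb{Z}$ with $\rho(\emptyset)=0$, $\rho(A)\le\rho(B)$ whenever $A\subseteq B\subseteq E$, and $\rho(A\cup B)+\rho(A\cap B)\le\rho(A)+\rho(B)$ for all $A,B\subseteq E$. For matroids $M_1,\dots,M_k$ on $E$, $r_{M_1}+\cdots+r_{M_k}$ denotes the pointwise sum of their rank functions. An incidence set of $\rho$ is a subset $X\subseteq E$ with $|X|\ge 2$ such that for every $Y\subseteq X$ with $|Y|\in\{1,2,3\}$, $\rho(Y)=1+\sum_{e\in Y}(\rho(e)-1)$. Here $[k]=\{1,\dots,k\}$ and $\rho(e)$ means $\rho(\{e\})$. *)

From mathcomp Require Import all_boot all_order all_algebra.
Set Implicit Arguments. Unset Strict Implicit. Unset Printing Implicit Defensive.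
Import Order.TTheory GRing.Theory Num.Theory.

Definition matroid_rank (E : finType) (r : {set E} -> nat) : Prop :=
  [/\ forall A : {set E}, r A <= #|A|,
      forall A B : {set E}, A \subset B -> r A <= r B
    & forall A B : {set E}, r (A :|: B) + r (A :&: B) <= r A + r B].

Definition m_indep (E : finType) (r : {set E} -> nat) (A : {set E}) : bool :=
  r A == #|A|.

Definition m_circuit (E : finType) (r : {set E} -> nat) (C : {set E}) : bool :=
  ~~ m_indep r C && [forall D : {set E}, (D \proper C) ==> m_indep r D].

Definition m_parallel (E : finType) (r : {set E} -> nat) (e f : E) : bool :=
  ((e == f) && (r [set e] == 1%N)) || m_circuit r [set e; f].

Definition all_parallel (E : finType) (r : {set E} -> nat) (X : {set E}) : Prop :=
  forall e f, e \in X -> f \in X -> m_parallel r e f.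

Definition no_two_parallel (E : finType) (r : {set E} -> nat) (X : {set E}) : Prop :=
  forall e f, e \in X -> f \in X -> e != f -> ~~ m_parallel r e f.

Local Open Scope ring_scope.

Definition polymatroid (E : finType) (rho : {set E} -> int) : Prop :=
  [/\ rho set0 = 0,
      forall A B : {set E}, A \subset B -> rho A <= rho B
    & forall A B : {set E}, rho (A :|: B) + rho (A :&: B) <= rho A + rho B].

Definition incidence_eq (E : finType) (rho : {set E} -> int) (Y : {set E}) : Prop :=
  rho Y = 1 + \sum_(e in Y) (rho [set e] - 1).

Definition incidence_set (E : finType) (rho : {set E} -> int) (X : {set E}) : Prop :=
  (2 <= #|X|)%N /\
  forall Y : {set E}, Y \subset X -> (1 <= #|Y| <= 3)%N -> incidence_eq rho Y.

From mathcomp Require Import all_boot all_order all_algebra zify.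
Import Order.TTheory GRing.Theory Num.Theory.
Set Implicit Arguments. Unset Strict Implicit. Unset Printing Implicit Defensive.

(* For a matroid rank r let the defect of Y be [\sum_(e in Y) r {e} - r Y]; it is
   monotone in Y, and on a pair {e, f} it is 1 exactly when e and f are parallel.
   As rho is the sum of the ranks, the incidence equation for Y says that the
   defects of Y in the M_i add up to |Y| - 1.  So each pair of an incidence set X
   is parallel in exactly one M_i, and the total defect 2 of a triple forces pairs
   sharing an element to get the same index; by transitivity of parallelism X is
   then a parallel class of a single M_i.  If X itself satisfies the equation, that
   class already has defect |X| - 1, so every other M_j has defect 0 on X, which
   leaves no room for a circuit with two elements.  For (2), if X and Y were
   parallel classes of the same M_i, then a and b would be parallel in M_i, so
   r_i {a, b} = 1 < r_i {a} + r_i {b}, against the modularity of rho on {a, b};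
   two common elements of X and Y would be parallel in two different M_i. *)

Section MatroidRank.

Variables (E : finType) (r : {set E} -> nat).
Hypothesis Hr : matroid_rank r.
Implicit Types (A B C X : {set E}) (e f g : E).

Lemma rank_le_card A : r A <= #|A|.
Proof. by case: Hr. Qed.

Lemma rank_mono A B : A \subset B -> r A <= r B.
Proof. by case: Hr => _ + _; apply. Qed.

Lemma rank_submod A B : r (A :|: B) + r (A :&: B) <= r A + r B.
Proof. by case: Hr. Qed.

Lemma rank0 : r set0 = 0.
Proof. by apply/eqP; rewrite -leqn0 -(cards0 E) rank_le_card. Qed.

Lemma rank_set1_le1 e : r [set e] <= 1.
Proof. by rewrite -(cards1 e) rank_le_card. Qed.

Lemma rank_subadd A B : r (A :|: B) <= r A + r B.
Proof. exact: leq_trans (leq_addr _ _) (rank_submod A B). Qed.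

Lemma rank_le_sum1 A : r A <= \sum_(e in A) r [set e].
Proof.
elim: {A}_.+1 {-2}A (ltnSn #|A|) => // n IH A ltAn.
have [->|[x xA]] := set_0Vmem A; first by rewrite rank0.
rewrite (big_setD1 x xA) -{1}(setD1K xA) /=.
apply: leq_trans (rank_subadd _ _) _; rewrite leq_add2l IH //.
by move: ltAn; rewrite (cardsD1 x A) xA.
Qed.

Lemma rank_union_le1 A B b : b \in A -> b \in B -> r [set b] = 1 ->
  r A <= 1 -> r B <= 1 -> r (A :|: B) <= 1.
Proof.
move=> bA bB rb1 rA rB; have := rank_submod A B.
have : r [set b] <= r (A :&: B) by apply: rank_mono; rewrite sub1set inE bA bB.
lia.
Qed.

Definition defect A := \sum_(e in A) r [set e] - r A.

Lemma defect_sub A B : A \subset B -> defect A <= defect B.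
Proof.
move=> sAB; rewrite /defect [\sum_(e in B) _](big_setID A) /= (setIidPr sAB).
have := rank_subadd (B :&: A) (B :\: A); rewrite setID (setIidPr sAB).
have := rank_le_sum1 (B :\: A); have := rank_le_sum1 A; lia.
Qed.

Lemma parallel_refl e : r [set e] = 1 -> m_parallel r e e.
Proof. by rewrite /m_parallel eqxx => ->. Qed.

Lemma parallel_pairE e f : e != f ->
  m_parallel r e f <-> [/\ r [set e] = 1, r [set f] = 1 & r [set e; f] = 1].
Proof.
move=> nef; have card_ef : #|[set e; f]| = 2 by rewrite cards2 nef.
have sub_e : [set e] \subset [set e; f] by rewrite sub1set !inE eqxx.
have sub_f : [set f] \subset [set e; f] by rewrite sub1set !inE eqxx orbT.
rewrite /m_parallel (negbTE nef) /= /m_circuit /m_indep card_ef.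
split=> [/andP[dep_ef /forallP indep_sub] | [re rf ref]].
  have indep1 g : [set g] \subset [set e; f] -> r [set g] = 1.
    move=> sub_g; have /implyP := indep_sub [set g].
    by rewrite properEcard sub_g cards1 card_ef => /(_ isT)/eqP.
  have re := indep1 e sub_e; have rf := indep1 f sub_f.
  have := rank_le_card [set e; f]; have := rank_mono sub_e.
  rewrite card_ef re rf; move: dep_ef => + r_ge1 r_le2.
  by split=> //; lia.
rewrite ref /=; apply/forallP=> D; apply/implyP; rewrite properEcard card_ef.
case/andP=> sub_D; rewrite ltnS leq_eqVlt ltnS leqn0 cards_eq0.
case/orP=> [/cards1P[g Dg] | /eqP ->]; last by rewrite rank0 cards0.
move: sub_D; rewrite Dg sub1set cards1 !inE => /orP[] /eqP ->; by rewrite ?re ?rf.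
Qed.

Lemma parallel_rank_le1 e f : m_parallel r e f -> r [set e; f] <= 1.
Proof.
have [<- _ | nef /(parallel_pairE nef)[_ _ ->] //] := eqVneq e f.
by rewrite setUid rank_set1_le1.
Qed.

Lemma parallel_sym e f : m_parallel r e f -> m_parallel r f e.
Proof.
have [-> // | nef] := eqVneq e f.
move=> /(parallel_pairE nef)[re rf ref].
by apply/parallel_pairE; rewrite 1?eq_sym 1?setUC.
Qed.

Lemma parallel_trans e f g :
  m_parallel r e f -> m_parallel r f g -> m_parallel r e g.
Proof.
have [<- // | nef] := eqVneq e f; have [<- // | nfg] := eqVneq f g.
move=> /(parallel_pairE nef)[re rf ref] /(parallel_pairE nfg)[_ rg rfg].
have [<- | neg] := eqVneq e g; first exact: parallel_refl.
apply/(parallel_pairE neg); split=> //.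
have lower : r [set e] <= r [set e; g] by rewrite rank_mono // sub1set !inE eqxx.
have sub_eg : [set e; g] \subset [set e; f] :|: [set f; g].
  by rewrite subUset !sub1set !inE !eqxx ?orbT.
have upper : r ([set e; f] :|: [set f; g]) <= 1.
  by apply: (rank_union_le1 _ _ rf); rewrite ?ref ?rfg ?inE ?eqxx ?orbT.
have := rank_mono sub_eg; lia.
Qed.

Lemma defect_pair e f : e != f -> defect [set e; f] = m_parallel r e f.
Proof.
move=> nef; rewrite /defect big_setU1 ?big_set1 ?inE //=.
have [/(parallel_pairE nef)[-> -> ->] // | npar] := boolP (m_parallel r e f).
have not_all1 : r [set e] = 1 -> r [set f] = 1 -> r [set e; f] <> 1.
  by move=> re rf ref; move/negP: npar; apply; apply/(parallel_pairE nef).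
have := rank_set1_le1 e; have := rank_set1_le1 f; have := rank_subadd [set e] [set f].
have := @rank_mono [set e] [set e; f]; rewrite sub1set !inE eqxx => /(_ isT).
have := @rank_mono [set f] [set e; f]; rewrite sub1set !inE eqxx orbT => /(_ isT).
move: not_all1; lia.
Qed.

Lemma all_parallel_nonloop X e :
  all_parallel r X -> 1 < #|X| -> e \in X -> r [set e] = 1.
Proof.
move=> parX /card_gt1P[x [y [xX yX nxy]]] eX.
have [g gX neg] : exists2 g, g \in X & e != g.
  by have [exy | nex] := eqVneq e x; [exists y; rewrite ?exy | exists x].
by have /(parallel_pairE neg)[] := parX e g eX gX.
Qed.

Lemma rank_parallel_class X : all_parallel r X -> r X <= 1.
Proof.
elim: {X}_.+1 {-2}X (ltnSn #|X|) => // n IH X ltXn parX.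
have [->|[x xX]] := set_0Vmem X; first by rewrite rank0.
have [X1 | [y yX1]] := set_0Vmem (X :\ x).
  by rewrite -(setD1K xX) X1 setU0 rank_set1_le1.
have yX : y \in X by case/setD1P: yX1.
have sub_X : X \subset (X :\ x) :|: [set x; y].
  by apply/subsetP=> z zX; rewrite !inE zX; case: eqP.
apply: leq_trans (rank_mono sub_X) (rank_union_le1 yX1 _ _ _ _).
- by rewrite !inE eqxx orbT.
- apply: all_parallel_nonloop parX _ yX; apply/card_gt1P; exists x, y.
  by case/setD1P: yX1; rewrite eq_sym.
- apply: IH; first by move: ltXn; rewrite (cardsD1 x X) xX.
  by move=> e f /setD1P[_ eX] /setD1P[_ fX]; apply: parX.
- exact/parallel_rank_le1/parX.
Qed.

Lemma defect_parallel_class X :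
  all_parallel r X -> 1 < #|X| -> #|X| <= (defect X).+1.
Proof.
move=> parX gt1X; rewrite /defect.
have -> : \sum_(e in X) r [set e] = #|X|.
  by rewrite -sum1_card; apply: eq_bigr => e; apply: all_parallel_nonloop.
have := rank_parallel_class parX; lia.
Qed.

Lemma circuit_defect0_card1 C : m_circuit r C -> defect C = 0 -> #|C| = 1.
Proof.
rewrite /m_circuit /m_indep /defect => /andP[dep_C /forallP indep_proper] def0.
have rC_lt : r C < #|C| by rewrite ltn_neqAle dep_C rank_le_card.
apply/eqP; rewrite eqn_leq andbC (leq_ltn_trans _ rC_lt) //=.
rewrite leqNgt; apply/negP => gt1C.
suff sum1 : \sum_(e in C) r [set e] = #|C| by move: def0 rC_lt; rewrite sum1; lia.
rewrite -sum1_card; apply: eq_bigr => e eC; apply/eqP.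
have /implyP := indep_proper [set e].
by rewrite properEcard sub1set eC cards1 gt1C => /(_ isT).
Qed.

End MatroidRank.

Lemma leq_sum_uniq (I : finType) (s : seq I) (F : I -> nat) :
  uniq s -> \sum_(i <- s) F i <= \sum_i F i.
Proof. by move=> uniq_s; rewrite big_uniq // [X in _ <= X](bigID (mem s)) leq_addr. Qed.

Lemma sumPosz (I : finType) (P : pred I) (F : I -> nat) :
  (\sum_(i | P i) Posz (F i))%R = Posz (\sum_(i | P i) F i).
Proof. by rewrite -[RHS]natz natr_sum; apply: eq_bigr => i _; rewrite natz. Qed.

Section RankDecomposition.

Variables (E : finType) (k : nat) (M : 'I_k -> {set E} -> nat).
Variable rho : {set E} -> int.
Hypothesis HM : forall i, matroid_rank (M i).
Hypothesis Hsum : forall A, rho A = (\sum_(i < k) Posz (M i A))%R.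
Implicit Types (A C X Y : {set E}) (a b e f g : E).

Lemma rho_natE A : rho A = Posz (\sum_(i < k) M i A).
Proof. by rewrite Hsum sumPosz. Qed.

Definition total_defect Y := \sum_(i < k) defect (M i) Y.

Lemma total_defect_incidence_eq Y : incidence_eq rho Y -> (total_defect Y).+1 = #|Y|.
Proof.
have split_sum :
    total_defect Y + \sum_(i < k) M i Y = \sum_(e in Y) \sum_(i < k) M i [set e].
  rewrite /total_defect -big_split exchange_big /=; apply: eq_bigr => i _.
  by rewrite subnK // rank_le_sum1.
rewrite /incidence_eq; under eq_bigr do rewrite rho_natE.
rewrite rho_natE sumrB sumr_const sumPosz -natz; lia.
Qed.

Lemma modular_pair_rank a b : rho [set a; b] = (rho [set a] + rho [set b])%R ->
  forall i, M i [set a; b] = M i [set a] + M i [set b].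
Proof.
rewrite !rho_natE -PoszD -big_split /= => /eqP; rewrite eqz_nat.
have le_sum i : M i [set a; b] <= M i [set a] + M i [set b] by apply: rank_subadd.
by rewrite (leqif_sum (fun i _ => leqif_eq (le_sum i))).2 => /'forall_eqP.
Qed.

Lemma parallel_classes_not_modular i X Y a b c :
  all_parallel (M i) X -> all_parallel (M i) Y -> 1 < #|X| -> 1 < #|Y| ->
  a \in X -> b \in Y -> c \in X -> c \in Y ->
  rho [set a; b] <> (rho [set a] + rho [set b])%R.
Proof.
move=> parX parY gt1X gt1Y aX bY cX cY /modular_pair_rank/(_ i).
have par_ab := parallel_trans (HM i) (parX a c aX cX) (parY c b cY bY).
rewrite (all_parallel_nonloop _ parX) // (all_parallel_nonloop _ parY) //.
by have := parallel_rank_le1 (HM i) par_ab; lia.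
Qed.

Section IncidenceSet.

Variable X : {set E}.
Hypothesis HX : incidence_set rho X.

Lemma total_defect_small_subset Y :
  Y \subset X -> 0 < #|Y| <= 3 -> (total_defect Y).+1 = #|Y|.
Proof. by case: HX => _ incX subYX cardY; apply/total_defect_incidence_eq/incX. Qed.

Lemma parallel_index_unique e f : e \in X -> f \in X -> e != f ->
  exists i, m_parallel (M i) e f /\ forall j, m_parallel (M j) e f -> j = i.
Proof.
move=> eX fX nef.
have /eqP : total_defect [set e; f] = 1.
  apply/eq_add_S; rewrite total_defect_small_subset ?cards2 ?nef //.
  by rewrite subUset !sub1set eX fX.
rewrite /total_defect (eq_bigr _ (fun i _ => defect_pair (HM i) nef)).
case/sum_nat_eq1 => i [_ par_i not_par]; exists i.
split; first by case: (m_parallel _ e f) par_i.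
move=> j par_j; apply/eqP; apply: contraTT par_j.
by move=> /not_par/(_ isT); case: (m_parallel _ e f).
Qed.

Lemma parallel_index_eq e f i j : e \in X -> f \in X -> e != f ->
  m_parallel (M i) e f -> m_parallel (M j) e f -> i = j.
Proof.
move=> eX fX nef par_i par_j.
have [l [_ uniq_l]] := parallel_index_unique eX fX nef.
by rewrite (uniq_l i par_i) (uniq_l j par_j).
Qed.

Lemma parallel_index_path e f g l m :
  e \in X -> f \in X -> g \in X -> e != f -> f != g -> e != g ->
  m_parallel (M l) e f -> m_parallel (M m) f g -> l = m.
Proof.
move=> eX fX gX nef nfg neg par_l par_m; apply/eqP/contraT => nlm.
set S := [set e; f; g].
have subS : S \subset X by rewrite !subUset !sub1set eX fX gX.
have card_S : #|S| = 3 by rewrite /S -setUA cardsU1 cards2 !inE negb_or nef neg nfg.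
have total_S : total_defect S = 2.
  by apply/eq_add_S; rewrite total_defect_small_subset // card_S.
have defect_S q x y : x \in S -> y \in S -> x != y -> m_parallel (M q) x y ->
    0 < defect (M q) S.
  move=> xS yS nxy par_q; have : 0 < defect (M q) [set x; y] by rewrite defect_pair ?par_q.
  by move/leq_trans; apply; apply: defect_sub; rewrite ?subUset ?sub1set ?xS ?yS.
have [p [par_p _]] := parallel_index_unique eX gX neg.
have [epl | npl] := eqVneq p l.
  rewrite epl in par_p; have := parallel_trans (HM l) (parallel_sym (HM l) par_l) par_p.
  by move/(parallel_index_eq fX gX nfg)/(_ par_m)/eqP; rewrite (negbTE nlm).
have [epm | npm] := eqVneq p m.
  rewrite epm in par_p; have := parallel_trans (HM m) par_p (parallel_sym (HM m) par_m).
  by move/(parallel_index_eq eX fX nef par_l)/eqP; rewrite (negbTE nlm).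
have [eS fS gS] : [/\ e \in S, f \in S & g \in S] by rewrite !inE !eqxx ?orbT.
have uniq_lmp : uniq [:: l; m; p] by rewrite /= !inE negb_or nlm ![_ == p]eq_sym npl npm.
have := leq_sum_uniq (fun q => defect (M q) S) uniq_lmp.
rewrite !big_cons big_nil -/(total_defect S) total_S /=.
have := defect_S l e f eS fS nef par_l; have := defect_S m f g fS gS nfg par_m.
have := defect_S p e g eS gS neg par_p.
by move: (defect (M l) S) (defect (M m) S) (defect (M p) S); clear; lia.
Qed.

Lemma exists_parallel_class : exists i, all_parallel (M i) X.
Proof.
have [/card_gt1P[e0 [f0 [e0X f0X ne0f0]]] _] := HX.
have [i [par_i _]] := parallel_index_unique e0X f0X ne0f0.
have par_e0 x : x \in X -> m_parallel (M i) x e0.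
  move=> xX; have [-> | nxe0] := eqVneq x e0.
    by apply: parallel_refl; have /(parallel_pairE (HM i) ne0f0)[] := par_i.
  have [-> | nxf0] := eqVneq x f0; first exact: parallel_sym.
  have [m [par_m _]] := parallel_index_unique xX e0X nxe0.
  by rewrite -(parallel_index_path xX e0X f0X nxe0 ne0f0 nxf0 par_m par_i).
exists i => e f eX fX.
exact: (parallel_trans (HM i) (par_e0 e eX) (parallel_sym (HM i) (par_e0 f fX))).
Qed.

Lemma incidence_circuit_card1 i j C :
  all_parallel (M i) X -> incidence_eq rho X -> j != i ->
  C \subset X -> m_circuit (M j) C -> #|C| = 1.
Proof.
move=> parX eqX nji subCX circC; apply: (circuit_defect0_card1 (HM j) circC).
have := total_defect_incidence_eq eqX; have := defect_parallel_class (HM i) parX HX.1.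
have := leq_sum_uniq (fun q => defect (M q) X) (_ : uniq [:: i; j]).
rewrite !big_cons big_nil -/(total_defect X) /= inE eq_sym nji => /(_ isT).
have := defect_sub (HM j) subCX.
move: (total_defect X) (defect (M i) X) (defect (M j) X) (defect (M j) C); clear; lia.
Qed.

End IncidenceSet.

Lemma incidence_sets_meet X Y a b :
  incidence_set rho X -> incidence_set rho Y -> a \in X -> b \in Y ->
  rho [set a; b] = (rho [set a] + rho [set b])%R -> X :&: Y != set0 ->
  #|X :&: Y| = 1 /\
  forall i j, all_parallel (M i) X -> all_parallel (M j) Y -> i != j.
Proof.
move=> HX HY aX bY mod_ab /set0Pn[c /setIP[cX cY]].
have neq_ij i j : all_parallel (M i) X -> all_parallel (M j) Y -> i != j.
  move=> parX parY; apply/eqP => eij; rewrite -eij in parY.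
  exact: parallel_classes_not_modular parX parY HX.1 HY.1 aX bY cX cY mod_ab.
split=> //; apply/eqP; rewrite eqn_leq leqNgt card_gt0 andbC; apply/andP; split.
  by apply/set0Pn; exists c; apply/setIP.
apply/negP => /card_gt1P[x [y [/setIP[xX xY] /setIP[yX yY] nxy]]].
have [i parX] := exists_parallel_class HX; have [j parY] := exists_parallel_class HY.
have := neq_ij i j parX parY.
by rewrite (parallel_index_eq HX xX yX nxy (parX x y xX yX) (parY x y xY yY)) eqxx.
Qed.

End RankDecomposition.

Local Open Scope ring_scope.

Theorem lemma2p5 (E : finType) (rho : {set E} -> int) (k : nat)
    (M : 'I_k -> {set E} -> nat)
    (Hrho : polymatroid rho)
    (HM : forall i, matroid_rank (M i))
    (Hsum : forall A : {set E}, rho A = \sum_(i < k) ((M i A)%:Z)) :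
  (forall X : {set E}, incidence_set rho X ->
     exists i : 'I_k,
       [/\ all_parallel (M i) X,
           (forall j : 'I_k, all_parallel (M j) X -> j = i),
           (forall j : 'I_k, j != i -> no_two_parallel (M j) X)
         & (incidence_eq rho X ->
              forall j : 'I_k, j != i ->
              forall C : {set E}, C \subset X -> m_circuit (M j) C ->
                #|C| = 1%N)])
  /\
  (forall (X Y : {set E}) (a b : E),
     incidence_set rho X -> incidence_set rho Y ->
     a \in X -> b \in Y -> rho [set a; b] = rho [set a] + rho [set b] ->
     X :&: Y != set0 ->
     #|X :&: Y| = 1%N /\
     (forall i j : 'I_k, all_parallel (M i) X -> all_parallel (M j) Y -> i != j)).
Proof.
split; last exact: incidence_sets_meet HM Hsum.
move=> X HX; have [i parX] := exists_parallel_class HM Hsum HX.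
have [/card_gt1P[e [f [eX fX nef]]] _] := HX.
exists i; split=> // [j parXj | j nji x y xX yX nxy | eqX j nji C].
- exact: (parallel_index_eq HM Hsum HX eX fX nef (parXj e f eX fX) (parX e f eX fX)).
- apply: contra nji => par_j; apply/eqP.
  exact: (parallel_index_eq HM Hsum HX xX yX nxy par_j (parX x y xX yX)).
- exact: (incidence_circuit_card1 HM Hsum HX parX eqX nji).
Qed.
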